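(* For every $\varepsilon\in(0,3]$, the Truncated Harmonic rule $f^{TH}_\varepsilon$ has metric distortion at most $3+\varepsilon$, and its utilitarian distortion is $O(\sqrt m\,H_m/\varepsilon)$, i.e., there is an absolute constant $C$ such that for all $n,m$ and all $\varepsilon\in(0,3]$ its utilitarian distortion on instances with $m$ alternatives is at most $C\sqrt m\,H_m/\varepsilon$.
   Context: Setting: $n$ agents $\mathcal N$, $m$ alternatives $\mathcal A$; agent $i$ has a strict ranking, $r_i(Y)$ is the rank of $Y$ (1 = top), $X\succ_iY$ iff $r_i(X)<r_i(Y)$; $\mathrm{plu}(X,\vec\sigma)$ is the number of agents ranking $X$ first; $H_m=\sum_{k=1}^m1/k$. Metric framework: pseudometric $d$ on $\mathcal N\cup\mathcal A$, consistent with $\vec\sigma$ if $X\succ_iY\Rightarrow d(i,X)\le d(i,Y)$; $\mathrm{SC}(X,d)=\sum_id(i,X)$; metric distortion of a randomized rule $f$ is $\sup_{\vec\sigma}\sup_{d}\mathbb E_{X\sim f(\vec\sigma)}[\mathrm{SC}(X,d)]/\min_X\mathrm{SC}(X,d)$. Utilitarian framework: $u_i:\mathcal A\to\mathbb R_{\ge0}$, $\sum_Xu_i(X)=1$, consistent if $X\succ_iY\Rightarrow u_i(X)\ge u_i(Y)$; $\mathrm{SW}(X,\vec u)=\sum_iu_i(X)$; utilitarian distortion of $f$ is $\sup_{\vec\sigma}\sup_{\vec u}\max_X\mathrm{SW}(X,\vec u)/\mathbb E_{X\sim f(\vec\sigma)}[\mathrm{SW}(X,\vec u)]$. Plurality Veto: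 initialize $\mathrm{score}(X)=\mathrm{plu}(X,\vec\sigma)$; let $S$ be the alternatives with positive score; process agents in a fixed order, each decrementing the score of her lowest-ranked alternative in $S$, removing it from $S$ when its score hits $0$; output the last alternative removed. (It is known to have metric distortion $3$.) Truncated Harmonic rule $f^{TH}_\varepsilon$: let $\hat X$ be the output of Plurality Veto on $\vec\sigma$; pick an agent $i$ uniformly at random; output $Y$ with probability $p(i,Y)=\frac{\varepsilon}{6H_m r_i(Y)}$ if $Y\succ_i\hat X$, $p(i,\hat X)=1-\sum_{Y\succ_i\hat X}p(i,Y)$, and $p(i,Y)=0$ if $\hat X\succ_iY$. *)

From HB Require Import structures.
From mathcomp Require Import all_boot all_order all_algebra all_fingroup.
From mathcomp Require Import reals.
Set Implicit Arguments. Unset Strict Implicit. Unset Printing Implicit Defensive.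
Import Order.TTheory GRing.Theory Num.Theory.
Local Open Scope ring_scope.

(* A profile assigns to each agent a
   strict ranking, encoded as a permutation: (sigma i Y : nat) is the
   0-based position of Y in agent i's ranking, so r_i(Y) = (sigma i Y).+1. *)
Definition profile (n m : nat) := 'I_n -> {perm 'I_m}.

Section Voting.
Variables (n m : nat) (sigma : profile n m).

Definition rank (i : 'I_n) (Y : 'I_m) : nat := (sigma i Y).+1.

Definition prefers (i : 'I_n) (X Y : 'I_m) : bool := (rank i X < rank i Y)%N.

Definition plu (X : 'I_m) : nat := #|[set i | rank i X == 1%N]|.

Definition pv_step (st : {ffun 'I_m -> nat} * option 'I_m) (i : 'I_n)
  : {ffun 'I_m -> nat} * option 'I_m :=
  let: (sc, last) := st in
  match [pick Y | (0 < sc Y)%N &&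
                  [forall Z, (0 < sc Z)%N ==> (rank i Z <= rank i Y)%N]] with
  | Some Y => ([ffun Z => if Z == Y then (sc Z).-1 else sc Z],
               if sc Y == 1%N then Some Y else last)
  | None => (sc, last)
  end.

(* Plurality Veto, agents processed in the fixed order 0, 1, ..., n-1;
   returns the last alternative removed (None only in degenerate cases,
   e.g. n = 0). *)
Definition plurality_veto : option 'I_m :=
  (foldl pv_step ([ffun X => plu X], None) (enum 'I_n)).2.

Variable R : realType.

Definition harmonic (k : nat) : R := \sum_(j < k) (j.+1%:R)^-1.

Definition th_p (eps : R) (Xhat : 'I_m) (i : 'I_n) (Y : 'I_m) : R :=
  if prefers i Y Xhat then eps / (6 * harmonic m * (rank i Y)%:R)
  else if Y == Xhat then
    1 - \sum_(Z | prefers i Z Xhat) eps / (6 * harmonic m * (rank i Z)%:R)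
  else 0.

(* Output distribution of f^TH_eps: agent i uniform, then Y w.p. p(i,Y). *)
Definition th_dist (eps : R) (Y : 'I_m) : R :=
  match plurality_veto with
  | Some Xhat => \sum_(i < n) n%:R^-1 * th_p eps Xhat i Y
  | None => 0
  end.

(* Metric framework: pseudometric on N ∪ A, encoded on 'I_n + 'I_m *)
Definition pseudometric (d : 'I_n + 'I_m -> 'I_n + 'I_m -> R) : Prop :=
  [/\ forall x, d x x = 0,
      forall x y, 0 <= d x y,
      forall x y, d x y = d y x &
      forall x y z, d x z <= d x y + d y z].

Definition metric_consistent (d : 'I_n + 'I_m -> 'I_n + 'I_m -> R) : Prop :=
  forall i X Y, prefers i X Y -> d (inl i) (inr X) <= d (inl i) (inr Y).

Definition SC (d : 'I_n + 'I_m -> 'I_n + 'I_m -> R) (X : 'I_m) : R :=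
  \sum_(i < n) d (inl i) (inr X).

Definition utility_consistent (u : 'I_n -> 'I_m -> R) : Prop :=
  [/\ forall i X, 0 <= u i X,
      forall i, \sum_(X < m) u i X = 1 &
      forall i X Y, prefers i X Y -> u i Y <= u i X].

Definition SW (u : 'I_n -> 'I_m -> R) (X : 'I_m) : R := \sum_(i < n) u i X.

End Voting.

From HB Require Import structures.
From mathcomp Require Import all_boot all_order all_algebra all_fingroup.
From mathcomp Require Import reals.
From mathcomp Require Import ring lra zify.
Set Implicit Arguments. Unset Strict Implicit. Unset Printing Implicit Defensive.
Import Order.TTheory GRing.Theory Num.Theory.
Local Open Scope ring_scope.

(* Each agent i vetoes an alternative Y_i that she ranks
   weakly below the final output Xh, and the multiset of vetoed alternatives
   is the multiset of plurality scores, i.e. of the agents' top choices.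
   This charging argument ([pv_charging]) gives, for Xh and any X,
   SC(Xh) <= SC(X) + sum_i d(X, top_i) <= 3 SC(X)  ([pv_metric]).

   Agent i's lottery moves mass at most eps / 6 from Xh to
   alternatives Y she prefers to Xh, and for those SC(Y) - SC(Xh) <=
   2 n d(i, Xh); averaging over i, E[SC] <= (1 + eps / 3) SC(Xh).

   Let k = eps / (6 H_m), E the expected welfare, and
   A(Y) the welfare Y gets from agents preferring it to Xh.  Since
   u_i(Y) r_i(Y) <= 1, the rule picks Y with probability >= (k / n) A(Y), so
   k sum_Y A(Y)^2 <= n E; also SW(Xh) <= 2 E and SW(X) <= A(X) + SW(Xh).
   Together with n <= sum_Y A(Y) + m SW(Xh) and Cauchy-Schwarz this yields
   k SW(X) <= 3 sqrt(m) E ([welfare_bound]), i.e. distortion 18 sqrt(m) H_m / eps. *)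

Section Rankings.
Variables (n m : nat) (sigma : profile n m).
Implicit Types (i : 'I_n) (Y Z : 'I_m).

Lemma rank_inj i : injective (rank sigma i).
Proof. by move=> Y Z [/val_inj/perm_inj]. Qed.

Lemma rank_leqP i Y Z :
  (rank sigma i Z <= rank sigma i Y)%N -> Z = Y \/ prefers sigma i Z Y.
Proof.
by rewrite leq_eqVlt => /orP[/eqP/rank_inj ->|]; [left | right].
Qed.

Lemma prefers_irrefl i Y : ~~ prefers sigma i Y Y.
Proof. by rewrite /prefers ltnn. Qed.

Lemma rank_gt0 (R : numDomainType) i Y : 0 < (rank sigma i Y)%:R :> R.
Proof. by rewrite ltr0n. Qed.

Hypothesis m_gt0 : (0 < m)%N.

Definition top i : 'I_m := (sigma i)^-1%g (Ordinal m_gt0).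

Lemma rank_eq1 i Y : (rank sigma i Y == 1%N) = (Y == top i).
Proof.
rewrite /rank eqSS; apply/eqP/eqP => [H|->]; last by rewrite permKV.
by rewrite -(permK (sigma i) Y); congr (_ _); apply: val_inj.
Qed.

Lemma rank_top i : rank sigma i (top i) = 1%N.
Proof. by apply/eqP; rewrite rank_eq1. Qed.

Lemma plu_weighted_sum (V : nmodType) (g : 'I_m -> V) :
  \sum_Y g Y *+ plu sigma Y = \sum_i g (top i).
Proof.
transitivity (\sum_Y \sum_(i | rank sigma i Y == 1%N) g Y).
  apply: eq_bigr => Y _; rewrite sumr_const; congr (_ *+ _).
  by apply: eq_card => i; rewrite inE.
rewrite (exchange_big_dep xpredT) //=; apply: eq_bigr => i _.
by rewrite (eq_bigl (pred1 (top i))) ?big_pred1_eq // => Y; rewrite rank_eq1.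
Qed.

Lemma plu_sum : (\sum_Y plu sigma Y)%N = n.
Proof.
have := plu_weighted_sum (fun=> 1%N); rewrite /=.
under eq_bigr do rewrite natn.
by rewrite sumr_const card_ord natn.
Qed.

End Rankings.

Section Metrics.
Variables (n m : nat) (sigma : profile n m) (R : realType).
Variable d : 'I_n + 'I_m -> 'I_n + 'I_m -> R.
Hypotheses (d_pseudo : pseudometric d) (d_cons : metric_consistent sigma d).
Implicit Types (i : 'I_n) (Y Z : 'I_m).

Lemma dist_rank_mono i Y Z :
  (rank sigma i Z <= rank sigma i Y)%N -> d (inl i) (inr Z) <= d (inl i) (inr Y).
Proof. by move=> /rank_leqP[->|/d_cons]. Qed.

(* If some agent i prefers Y to Z, then Y and Z are within 2 d(i, Z) of each
   other, so switching from Z to Y costs the n agents at most n * 2 d(i, Z). *)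
Lemma sc_gap i Y Z : prefers sigma i Y Z ->
  SC d Y - SC d Z <= n%:R * (2 * d (inl i) (inr Z)).
Proof.
case: d_pseudo => _ _ dsym dtri pref.
have close : d (inr Z) (inr Y) <= 2 * d (inl i) (inr Z).
  have := dtri (inr Z) (inl i) (inr Y); rewrite (dsym (inr Z) (inl i)).
  have := d_cons pref; lra.
rewrite /SC -sumrB; apply: (@le_trans _ _ (\sum_(j < n) 2 * d (inl i) (inr Z))).
  by apply: ler_sum => j _; apply: le_trans close; have := dtri (inl j) (inr Z) (inr Y); lra.
by rewrite sumr_const card_ord -[X in X <= _]mulr_natl.
Qed.

End Metrics.

Section PluralityVeto.
Variables (n m : nat) (sigma : profile n m).
Implicit Types (i : 'I_n) (Y Z : 'I_m) (sc : {ffun 'I_m -> nat}).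

Definition veto sc Y : {ffun 'I_m -> nat} :=
  [ffun Z => if Z == Y then (sc Z).-1 else sc Z].

Lemma sum_veto (V : nmodType) (g : 'I_m -> V) sc Y : (0 < sc Y)%N ->
  \sum_Z g Z *+ sc Z = g Y + \sum_Z g Z *+ veto sc Y Z.
Proof.
move=> live; rewrite (bigD1 Y) // [in RHS](bigD1 Y) //= ffunE eqxx addrA.
rewrite -mulrS prednK //; congr (_ + _); apply: eq_bigr => Z /negbTE ZY.
by rewrite ffunE ZY.
Qed.

Lemma sum_veto_nat sc Y : (0 < sc Y)%N -> (\sum_Z sc Z = (\sum_Z veto sc Y Z).+1)%N.
Proof.
move=> live; rewrite (bigD1 Y) // [in RHS](bigD1 Y) //= ffunE eqxx.
rewrite -[in LHS](prednK live) addSn; congr (_ + _).+1.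
by apply: eq_bigr => Z /negbTE ZY; rewrite ffunE ZY.
Qed.

Lemma pv_step_veto sc last i : (0 < \sum_Y sc Y)%N ->
  exists Y, [/\ (0 < sc Y)%N,
    forall Z, (0 < sc Z)%N -> (rank sigma i Z <= rank sigma i Y)%N &
    pv_step sigma (sc, last) i = (veto sc Y, if sc Y == 1%N then Some Y else last)].
Proof.
move=> pos; rewrite /pv_step; case: pickP => [Y /andP[live /forallP low]|none].
  by exists Y; split=> // Z; apply/implyP.
exfalso; have [Z0 live0|dead] := pickP (fun Z => 0 < sc Z)%N; last first.
  by move: pos; rewrite big1 // => Z _; apply/eqP; rewrite -leqn0 leqNgt dead.
have [Y liveY lowY] := @arg_maxnP _ Z0 (fun Z => 0 < sc Z)%N (rank sigma i) live0.
by move: (none Y); rewrite liveY /=; move/negP; apply; apply/forallP=> Z; apply/implyP/lowY.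
Qed.

Variable R : numDomainType.

(* Charging argument behind Plurality Veto: every agent i vetoes an
   alternative Y_i that she ranks weakly below the final output Xh, and the
   vetoed alternatives exhaust the initial scores.  Hence any charge f with
   f i Z <= g Y whenever i weakly prefers Z to Y satisfies
   sum_i f i Xh <= sum_i g Y_i = sum_Y sc(Y) g(Y). *)
Lemma pv_charging (f : 'I_n -> 'I_m -> R) (g : 'I_m -> R) :
  (forall i Y Z, (rank sigma i Z <= rank sigma i Y)%N -> f i Z <= g Y) ->
  forall (s : seq 'I_n) sc last, (\sum_Y sc Y)%N = size s -> (0 < size s)%N ->
  exists2 Xh, (foldl (pv_step sigma) (sc, last) s).2 = Some Xh &
    (0 < sc Xh)%N /\ \sum_(i <- s) f i Xh <= \sum_Y g Y *+ sc Y.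
Proof.
move=> charge; elim=> [//|i s IH] sc last size_sc _.
have -> : foldl (pv_step sigma) (sc, last) (i :: s) =
          foldl (pv_step sigma) (pv_step sigma (sc, last) i) s by [].
have [Y [liveY lowY ->]] := @pv_step_veto sc last i (ltac:(by rewrite size_sc)).
have size_veto : (\sum_Z veto sc Y Z)%N = size s.
  by apply: succn_inj; rewrite -sum_veto_nat.
rewrite (sum_veto g liveY).
case: s IH size_sc size_veto => [|j s] IH size_sc size_veto.
  have dead Z : veto sc Y Z = 0%N.
    by move/eqP: size_veto; rewrite sum_nat_eq0 => /forallP/(_ Z)/eqP.
  have -> : sc Y = 1%N by move: (dead Y); rewrite ffunE eqxx; lia.
  exists Y => //; split=> //.
  rewrite big_cons big_nil big1 ?addr0 => [|Z _]; [exact: charge | by rewrite dead].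
have [Xh out [liveXh sumXh]] := IH _ (if sc Y == 1%N then Some Y else last) size_veto isT.
have {}liveXh : (0 < sc Xh)%N by move: liveXh; rewrite ffunE; case: eqP => // ->; lia.
by exists Xh => //; split=> //; rewrite big_cons; apply: lerD => //; apply: charge; apply: lowY.
Qed.

End PluralityVeto.

Section PluralityVetoOutput.
Variables (n m : nat) (sigma : profile n m).
Hypotheses (n_gt0 : (0 < n)%N) (m_gt0 : (0 < m)%N).
Local Notation top := (top sigma m_gt0).

Lemma pv_charging_profile (R : numDomainType) (f : 'I_n -> 'I_m -> R) (g : 'I_m -> R) :
  (forall i Y Z, (rank sigma i Z <= rank sigma i Y)%N -> f i Z <= g Y) ->
  exists2 Xh, plurality_veto sigma = Some Xh & \sum_i f i Xh <= \sum_i g (top i).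
Proof.
move=> charge; have size_plu : (\sum_Y [ffun X => plu sigma X] Y)%N = size (enum 'I_n).
  by rewrite size_enum_ord -[RHS](plu_sum sigma m_gt0); apply: eq_bigr => Y _; rewrite ffunE.
have [|Xh out [_ sumXh]] := pv_charging charge None size_plu; first by rewrite size_enum_ord.
exists Xh => //; rewrite -(plu_weighted_sum sigma m_gt0).
by move: sumXh; rewrite big_enum /=; under [X in _ <= X -> _]eq_bigr do rewrite ffunE.
Qed.

Lemma pv_defined : exists Xh, plurality_veto sigma = Some Xh.
Proof.
have [|Xh out _] := @pv_charging_profile int (fun _ _ => 0) (fun _ => 0).
  by move=> *; rewrite lexx.
by exists Xh.
Qed.

Variable R : realType.
Implicit Type d : 'I_n + 'I_m -> 'I_n + 'I_m -> R.

(* Plurality Veto has metric distortion 3: SC(Xh) <= SC(X) + sum_i d(X, top_i)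
   by charging, and d(X, top_i) <= 2 d(i, X) since i prefers top_i to X. *)
Lemma pv_metric d Xh X : pseudometric d -> metric_consistent sigma d ->
  plurality_veto sigma = Some Xh -> SC d Xh <= 3 * SC d X.
Proof.
move=> [_ _ dsym dtri] cons out.
have [|Xh' out' charged] := @pv_charging_profile R
  (fun i Z => d (inl i) (inr Z) - d (inl i) (inr X)) (fun Y => d (inr X) (inr Y)).
  move=> i Y Z /(dist_rank_mono cons) ZY; rewrite lerBlDl.
  exact: le_trans ZY (dtri _ _ _).
move: out'; rewrite out => -[eXh]; subst Xh'.
have top_close i : d (inr X) (inr (top i)) <= 2 * d (inl i) (inr X).
  have := dtri (inr X) (inl i) (inr (top i)); rewrite (dsym (inr X) (inl i)).
  have : d (inl i) (inr (top i)) <= d (inl i) (inr X).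
    by apply: (dist_rank_mono cons); rewrite rank_top.
  lra.
move: charged; rewrite sumrB => charged.
have sum_top : \sum_i d (inr X) (inr (top i)) <= 2 * SC d X.
  by rewrite /SC mulr_sumr; apply: ler_sum => i _; exact: top_close.
move: sum_top; rewrite /SC; lra.
Qed.

End PluralityVetoOutput.

Lemma harmonic_ge1 (R : realType) m : (0 < m)%N -> 1 <= harmonic R m.
Proof.
case: m => // m _; rewrite /harmonic big_ord_recl /= invr1 lerDl.
by apply: sumr_ge0 => j _; rewrite invr_ge0.
Qed.

Section TruncatedHarmonic.
Variables (n m : nat) (sigma : profile n m) (R : realType) (eps : R) (Xh : 'I_m).
Hypotheses (m_gt0 : (0 < m)%N) (eps_gt0 : 0 < eps) (eps_le3 : eps <= 3).
Implicit Types (i : 'I_n) (Y Z : 'I_m).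
Local Notation h := (harmonic R m).

Definition th_scale : R := eps / (6 * h).

Lemma th_scale_gt0 : 0 < th_scale.
Proof. by have := harmonic_ge1 R m_gt0; rewrite /th_scale => h1; apply: divr_gt0 => //; lra. Qed.

Lemma th_scale_le_half : th_scale <= 1 / 2.
Proof.
have := harmonic_ge1 R m_gt0; have := eps_le3; rewrite /th_scale => e3 h1.
by rewrite ler_pdivrMr; [nra | lra].
Qed.

Lemma th_p_pref i Y : prefers sigma i Y Xh ->
  th_p sigma eps Xh i Y = th_scale / (rank sigma i Y)%:R.
Proof. by move=> pref; rewrite /th_p pref invfM mulrA. Qed.

Lemma sum_inv_rank i : \sum_Y ((rank sigma i Y)%:R)^-1 = h.
Proof. by rewrite /harmonic [RHS](reindex_inj (@perm_inj _ (sigma i))). Qed.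

Lemma th_moved_mass i :
  \sum_(Y | prefers sigma i Y Xh) eps / (6 * h * (rank sigma i Y)%:R) <= eps / 6.
Proof.
under eq_bigr do rewrite invfM mulrA; rewrite -mulr_sumr.
have -> : eps / 6 = th_scale * h by rewrite /th_scale; field; have := harmonic_ge1 R m_gt0; lra.
apply: ler_wpM2l; first exact: ltW th_scale_gt0.
rewrite -(sum_inv_rank i) [leRHS](bigID (prefers sigma i ^~ Xh)) /= lerDl.
by apply: sumr_ge0 => Y _; rewrite invr_ge0.
Qed.

(* The probabilities are nonnegative: Xh keeps at least 1 - eps / 6. *)
Lemma th_p_ge0 i Y : 0 <= th_p sigma eps Xh i Y.
Proof.
have := th_moved_mass i; rewrite /th_p; case: ifP => [_ _|_].
  by rewrite invfM mulrA; apply: divr_ge0; [exact: ltW th_scale_gt0 | exact: ler0n].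
by case: ifP => // _ moved; rewrite subr_ge0; apply: le_trans moved _; have := eps_le3; lra.
Qed.

Lemma th_p_Xh i : 1 / 2 <= th_p sigma eps Xh i Xh.
Proof.
have := th_moved_mass i; rewrite /th_p (negbTE (prefers_irrefl _ _ _)) eqxx => moved.
by have := eps_le3; lra.
Qed.

Lemma th_p_harmonic i Y : prefers sigma i Y Xh ->
  th_p sigma eps Xh i Y = eps / (6 * h * (rank sigma i Y)%:R).
Proof. by rewrite /th_p => ->. Qed.

Lemma th_p_off i Y : ~~ prefers sigma i Y Xh -> Y != Xh -> th_p sigma eps Xh i Y = 0.
Proof. by rewrite /th_p => /negbTE -> /negbTE ->. Qed.

Lemma th_p_sum1 i : \sum_Y th_p sigma eps Xh i Y = 1.
Proof.
rewrite (bigID (prefers sigma i ^~ Xh)) /= (bigD1 Xh (prefers_irrefl _ _ _)) /=.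
rewrite [X in _ + (_ + X)]big1 => [|Y /andP[]]; last exact: th_p_off.
rewrite addr0 (eq_bigr _ (@th_p_harmonic i)) /th_p (negbTE (prefers_irrefl _ _ _)) eqxx.
by rewrite addrC subrK.
Qed.

Lemma th_expect i (g : 'I_m -> R) :
  \sum_Y th_p sigma eps Xh i Y * g Y =
  g Xh + \sum_(Y | prefers sigma i Y Xh) th_p sigma eps Xh i Y * (g Y - g Xh).
Proof.
have -> : \sum_Y th_p sigma eps Xh i Y * g Y =
          g Xh * \sum_Y th_p sigma eps Xh i Y + \sum_Y th_p sigma eps Xh i Y * (g Y - g Xh).
  by rewrite mulr_sumr -big_split; apply: eq_bigr => Y _ /=; ring.
rewrite th_p_sum1 mulr1 (bigID (prefers sigma i ^~ Xh)) /= [X in _ + (_ + X)]big1 ?addr0 //.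
by move=> Y YXh; have [->|/(th_p_off YXh) ->] := eqVneq Y Xh; rewrite ?subrr ?mulr0 ?mul0r.
Qed.

Lemma th_expect_le i (g : 'I_m -> R) c : 0 <= c ->
  (forall Y, prefers sigma i Y Xh -> g Y - g Xh <= c) ->
  \sum_Y th_p sigma eps Xh i Y * g Y <= g Xh + eps / 6 * c.
Proof.
move=> c_ge0 gain; rewrite th_expect lerD2l.
apply: le_trans (_ : _ <= \sum_(Y | prefers sigma i Y Xh) th_p sigma eps Xh i Y * c) _.
  by apply: ler_sum => Y pref; apply: ler_wpM2l; [exact: th_p_ge0 | exact: gain].
rewrite -mulr_suml; apply: ler_wpM2r => //.
by rewrite (eq_bigr _ (@th_p_harmonic i)) th_moved_mass.
Qed.

Definition th_mix Y : R := \sum_i n%:R^-1 * th_p sigma eps Xh i Y.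

Lemma th_mix_ge0 Y : 0 <= th_mix Y.
Proof. by apply: sumr_ge0 => i _; rewrite mulr_ge0 ?invr_ge0 ?th_p_ge0. Qed.

Lemma th_mix_Xh : (0 < n)%N -> 1 / 2 <= th_mix Xh.
Proof.
move=> n_gt0; apply: le_trans (_ : \sum_(i < n) n%:R^-1 * (1 / 2) <= _).
  by rewrite sumr_const card_ord -[_ *+ n]mulr_natl mulrA mulfV ?mul1r // pnatr_eq0 -lt0n.
by apply: ler_sum => i _; rewrite ler_wpM2l ?invr_ge0 ?th_p_Xh.
Qed.

End TruncatedHarmonic.

Section TruncatedHarmonicRule.
Variables (n m : nat) (sigma : profile n m) (R : realType) (eps : R) (Xh : 'I_m).
Hypothesis pv_out : plurality_veto sigma = Some Xh.

Lemma th_dist_mix : th_dist sigma eps =1 th_mix sigma eps Xh.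
Proof. by move=> Y; rewrite /th_dist pv_out. Qed.

Lemma th_expectation (g : 'I_m -> R) :
  \sum_Y th_dist sigma eps Y * g Y =
  n%:R^-1 * \sum_i \sum_Y th_p sigma eps Xh i Y * g Y.
Proof.
under eq_bigr do rewrite th_dist_mix /th_mix mulr_suml.
rewrite exchange_big mulr_sumr; apply: eq_bigr => i _.
by rewrite mulr_sumr; apply: eq_bigr => Y _; rewrite mulrA.
Qed.

End TruncatedHarmonicRule.

(* Metric distortion: with Xh the Plurality Veto output, each agent's lottery
   raises the expected cost by at most (eps / 6) * n * 2 d(i, Xh), hence the
   expected cost is at most (1 + eps / 3) SC(Xh) <= (3 + eps) SC(X). *)
Lemma th_metric_distortion (R : realType) (n m : nat) (eps : R) :
  (0 < n)%N -> (0 < m)%N -> 0 < eps -> eps <= 3 ->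
  forall (sigma : profile n m) (d : 'I_n + 'I_m -> 'I_n + 'I_m -> R),
  pseudometric d -> metric_consistent sigma d -> forall X : 'I_m,
  \sum_(Y < m) th_dist sigma eps Y * SC d Y <= (3 + eps) * SC d X.
Proof.
move=> n_gt0 m_gt0 eps_gt0 eps_le3 sigma d d_pseudo d_cons X.
have [Xh pv_out] := pv_defined sigma n_gt0 m_gt0.
have pv3 : SC d Xh <= 3 * SC d X by exact: pv_metric pv_out.
have [_ d_ge0 _ _] := d_pseudo.
have SC_ge0 Y : 0 <= SC d Y by apply: sumr_ge0 => i _.
have agent i : \sum_Y th_p sigma eps Xh i Y * SC d Y <=
               SC d Xh + n%:R * (eps / 3) * d (inl i) (inr Xh).
  have gap_ge0 : 0 <= n%:R * (2 * d (inl i) (inr Xh)).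
    by rewrite mulr_ge0 ?ler0n // mulr_ge0.
  have gap Y : prefers sigma i Y Xh -> SC d Y - SC d Xh <= n%:R * (2 * d (inl i) (inr Xh)).
    exact: sc_gap.
  by have := th_expect_le m_gt0 eps_gt0 eps_le3 gap_ge0 gap; lra.
rewrite (th_expectation eps pv_out).
apply: le_trans (_ : _ <= n%:R^-1 * \sum_i (SC d Xh + n%:R * (eps / 3) * d (inl i) (inr Xh))) _.
  by apply: ler_wpM2l; [rewrite invr_ge0 ler0n | exact: ler_sum].
have n_pos : 0 < n%:R :> R by rewrite ltr0n.
rewrite big_split /= sumr_const card_ord -mulr_sumr -/(SC d Xh) -[SC d Xh *+ n]mulr_natl.
have -> : n%:R^-1 * (n%:R * SC d Xh + n%:R * (eps / 3) * SC d Xh) = (1 + eps / 3) * SC d Xh.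
  by field; rewrite gt_eqF.
have := SC_ge0 Xh; have := SC_ge0 X; nra.
Qed.

Lemma sqr_sum_le (R : realFieldType) (T : finType) (a : T -> R) :
  (\sum_t a t) ^+ 2 <= #|T|%:R * \sum_t a t ^+ 2.
Proof.
have [T0|T_gt0] := posnP #|T|.
  have empty (F : T -> R) : \sum_t F t = 0 by apply: big_pred0 => t; case: (fintype0 t T0).
  by rewrite !empty expr0n mulr0.
set S := \sum_t a t; set N := #|T|%:R.
have N_gt0 : 0 < N by rewrite ltr0n.
have : 0 <= \sum_t (N * a t - S) ^+ 2 by apply: sumr_ge0 => t _; exact: sqr_ge0.
have -> : \sum_t (N * a t - S) ^+ 2 = N * (N * \sum_t a t ^+ 2 - S ^+ 2).
  rewrite (eq_bigr (fun t => N ^+ 2 * a t ^+ 2 - (2 * N * S) * a t + S ^+ 2)) => [|t _]; last by ring.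
  by rewrite !big_split /= sumrN -!mulr_sumr sumr_const -/S -/N; ring.
by rewrite pmulr_rge0 // subr_ge0.
Qed.

Section Utilities.
Variables (n m : nat) (sigma : profile n m) (R : realType) (u : 'I_n -> 'I_m -> R).
Hypothesis u_cons : utility_consistent sigma u.
Implicit Types (i : 'I_n) (Y Z : 'I_m).

Lemma util_ge0 i Y : 0 <= u i Y.
Proof. by case: u_cons. Qed.

Lemma util_rank_mono i Y Z :
  (rank sigma i Z <= rank sigma i Y)%N -> u i Y <= u i Z.
Proof. by case: u_cons => _ _ mono /rank_leqP[->|/mono]. Qed.

(* Agent i has r_i(Y) alternatives worth at least u_i(Y) each, and her
   utilities sum to 1. *)
Lemma util_rank i Y : u i Y * (rank sigma i Y)%:R <= 1.
Proof.
have [_ sum1 _] := u_cons.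
pose above := [pred Z | (sigma i Z <= sigma i Y)%N].
have card_above : #|above| = rank sigma i Y.
  rewrite -sum1_card (reindex_inj (@perm_inj _ (sigma i)^-1%g)) /=.
  rewrite (eq_bigl (fun k : 'I_m => (k < (sigma i Y).+1)%N)) => [|k]; last by rewrite inE permKV ltnS.
  by rewrite -(big_ord_widen _ (fun=> 1%N)) ?ltn_ord // sum1_card card_ord.
rewrite -card_above -sum1_card natr_sum mulr_sumr.
apply: le_trans (_ : _ <= \sum_(Z in above) u i Z) _.
  by apply: ler_sum => Z; rewrite inE mulr1 -ltnS => Z_above; exact: util_rank_mono.
rewrite -(sum1 i) [leRHS](bigID [in above]) /= lerDl.
by apply: sumr_ge0 => Z _; exact: util_ge0.
Qed.

Lemma sum_SW : \sum_Y SW u Y = n%:R.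
Proof.
have [_ sum1 _] := u_cons.
by rewrite /SW exchange_big /= (eq_bigr _ (fun i _ => sum1 i)) sumr_const card_ord.
Qed.

Variable Xh : 'I_m.

Definition pref_welfare Y : R := \sum_(i | prefers sigma i Y Xh) u i Y.

Lemma pref_welfare_ge0 Y : 0 <= pref_welfare Y.
Proof. by apply: sumr_ge0 => i _; exact: util_ge0. Qed.

Lemma pref_welfare_le Y : pref_welfare Y <= SW u Y.
Proof.
rewrite /SW [leRHS](bigID (fun i => prefers sigma i Y Xh)) /= lerDl.
by apply: sumr_ge0 => i _; exact: util_ge0.
Qed.

(* Agents not preferring Y to Xh value Y at most as much as Xh. *)
Lemma SW_split Y : SW u Y <= pref_welfare Y + SW u Xh.
Proof.
rewrite /SW (bigID (fun i => prefers sigma i Y Xh)) /= lerD2l.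
apply: le_trans (_ : _ <= \sum_(i | ~~ prefers sigma i Y Xh) u i Xh) _.
  by apply: ler_sum => i; rewrite /prefers -leqNgt; exact: util_rank_mono.
rewrite [leRHS](bigID (fun i => prefers sigma i Y Xh)) /= lerDr.
by apply: sumr_ge0 => i _; exact: util_ge0.
Qed.

Lemma population_split : n%:R <= \sum_Y pref_welfare Y + m%:R * SW u Xh.
Proof.
rewrite -sum_SW; apply: le_trans (ler_sum _ (fun Y _ => SW_split Y)) _.
by rewrite big_split /= sumr_const card_ord mulr_natl.
Qed.

End Utilities.

Section WelfareBound.
Variables (n m : nat) (sigma : profile n m) (R : realType) (eps : R).
Variables (u : 'I_n -> 'I_m -> R) (Xh : 'I_m).
Hypotheses (n_gt0 : (0 < n)%N) (m_gt0 : (0 < m)%N) (eps_gt0 : 0 < eps) (eps_le3 : eps <= 3).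
Hypothesis u_cons : utility_consistent sigma u.
Implicit Types (i : 'I_n) (X Y : 'I_m).

Local Notation k := (@th_scale m R eps).
Local Notation mix := (th_mix sigma eps Xh).
Local Notation A := (pref_welfare sigma u Xh).
Let E : R := \sum_Y mix Y * SW u Y.
Let Q : R := \sum_Y A Y ^+ 2.

Let n_pos : 0 < n%:R :> R. Proof. by rewrite ltr0n. Qed.
Let SW_ge0 Y : 0 <= SW u Y. Proof. by apply: sumr_ge0 => i _; exact: util_ge0 u_cons i Y. Qed.
Let A_ge0 Y : 0 <= A Y. Proof. exact: pref_welfare_ge0 u_cons Xh Y. Qed.
Let E_ge0 : 0 <= E. Proof. by apply: sumr_ge0 => Y _; rewrite mulr_ge0 ?th_mix_ge0. Qed.

(* An agent preferring Y to Xh moves probability k / r_i(Y) >= k u_i(Y) to Y. *)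
Lemma th_p_util i Y : prefers sigma i Y Xh -> k * u i Y <= th_p sigma eps Xh i Y.
Proof.
move=> pref; rewrite th_p_pref // ler_pdivlMr ?rank_gt0 // -mulrA.
by apply: ler_piMr; [exact: ltW (th_scale_gt0 m_gt0 eps_gt0) | exact: util_rank].
Qed.

Lemma mix_lower Y : k / n%:R * A Y <= mix Y.
Proof.
rewrite /th_mix (bigID (fun i => prefers sigma i Y Xh)) /= -[leLHS]addr0.
apply: lerD; last by apply: sumr_ge0 => i _; rewrite mulr_ge0 ?invr_ge0 ?th_p_ge0.
rewrite mulr_sumr; apply: ler_sum => i pref.
by rewrite mulrAC mulrC; apply: ler_wpM2l; [rewrite invr_ge0 | exact: th_p_util].
Qed.

(* Xh alone guarantees E >= SW(Xh) / 2. *)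
Lemma welfare_Xh : SW u Xh <= 2 * E.
Proof.
have half := th_mix_Xh sigma Xh m_gt0 eps_gt0 eps_le3 n_gt0.
have : mix Xh * SW u Xh <= E.
  rewrite /E (bigD1 Xh) //= lerDl; apply: sumr_ge0 => Y _.
  by rewrite mulr_ge0 ?th_mix_ge0.
have := SW_ge0 Xh; nra.
Qed.

(* Every Y contributes at least (k / n) A(Y)^2 to E. *)
Lemma welfare_quad : k * Q <= n%:R * E.
Proof.
have per_Y Y : k / n%:R * A Y ^+ 2 <= mix Y * SW u Y.
  rewrite expr2 mulrA; apply: ler_pM.
  - apply: mulr_ge0 (A_ge0 Y); apply: divr_ge0 (ler0n _ _).
    exact: ltW (th_scale_gt0 m_gt0 eps_gt0).
  - exact: A_ge0.
  - exact: mix_lower.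
  - exact: pref_welfare_le.
have kQ : k / n%:R * Q <= E by rewrite /Q mulr_sumr; apply: ler_sum => Y _; exact: per_Y.
have -> : k * Q = n%:R * (k / n%:R * Q) by field; rewrite gt_eqF.
by apply: ler_wpM2l => //; exact: ltW.
Qed.

(* Either the supporters' welfare or the welfare of Xh accounts for half of
   the total welfare n; both cases give k n <= 4 m E. *)
Lemma population_bound : k * n%:R <= 4 * m%:R * E.
Proof.
set S := \sum_Y A Y; set W := SW u Xh.
have split : n%:R <= S + m%:R * W := population_split u_cons Xh.
have k_gt0 := th_scale_gt0 m_gt0 eps_gt0; have k_le := th_scale_le_half m_gt0 eps_le3.
have W_le := welfare_Xh; have W_ge0 := SW_ge0 Xh; have E0 := E_ge0; have N0 := n_pos.
have m_ge0 : 0 <= m%:R :> R by rewrite ler0n.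
have [S_big|S_small] := lerP (n%:R / 2) S.
  have CS : S ^+ 2 <= m%:R * Q by rewrite -[m in m%:R]card_ord sqr_sum_le.
  have N2 : n%:R ^+ 2 <= 4 * (m%:R * Q) by nra.
  have kQ := welfare_quad.
  have : (k * n%:R) * n%:R <= (4 * m%:R * E) * n%:R by nra.
  by rewrite ler_pM2r.
have mW : m%:R * W <= m%:R * (2 * E) by rewrite ler_wpM2l.
nra.
Qed.

(* (k A(X))^2 <= k^2 sum_Y A(Y)^2 <= k n E <= 4 m E^2. *)
Lemma pref_bound X : k * A X <= 2 * Num.sqrt m%:R * E.
Proof.
have k_gt0 := th_scale_gt0 m_gt0 eps_gt0; have E0 := E_ge0.
have QX : A X ^+ 2 <= Q.
  by rewrite /Q (bigD1 X) //= lerDl; apply: sumr_ge0 => Y _; exact: sqr_ge0.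
have kA : k ^+ 2 * A X ^+ 2 <= k ^+ 2 * Q by rewrite ler_wpM2l ?sqr_ge0.
have kQ : k * (k * Q) <= k * (n%:R * E) by rewrite ler_pM2l // welfare_quad.
have kN : (k * n%:R) * E <= (4 * m%:R * E) * E by rewrite ler_wpM2r // population_bound.
have sq : (k * A X) ^+ 2 <= (2 * Num.sqrt m%:R * E) ^+ 2.
  have -> : (2 * Num.sqrt m%:R * E) ^+ 2 = 4 * m%:R * E * E.
    by rewrite !exprMn sqr_sqrtr ?ler0n //; ring.
  have -> : (k * A X) ^+ 2 = k ^+ 2 * A X ^+ 2 by ring.
  lra.
move: sq; rewrite ler_sqr // nnegrE; last by rewrite !mulr_ge0 ?sqrtr_ge0.
by rewrite mulr_ge0 ?A_ge0 ?ltW.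
Qed.

Lemma welfare_bound X : k * SW u X <= 3 * Num.sqrt m%:R * E.
Proof.
have := SW_split u_cons Xh X; have := pref_bound X; have := welfare_Xh.
have sqrt_m_ge1 : 1 <= Num.sqrt m%:R :> R by rewrite -[leLHS]sqrtr1 ler_sqrt ?ler0n // ler1n.
have := th_scale_le_half m_gt0 eps_le3; have := th_scale_gt0 m_gt0 eps_gt0.
have := E_ge0; nra.
Qed.

End WelfareBound.

(* Utilitarian distortion O(sqrt m * H_m / eps), with constant 18: divide the
   welfare bound by k = eps / (6 H_m). *)
Lemma th_utilitarian_distortion (R : realType) :
  exists C : R, forall (n m : nat) (eps : R), (0 < n)%N -> (0 < m)%N ->
  0 < eps -> eps <= 3 -> forall (sigma : profile n m) (u : 'I_n -> 'I_m -> R),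
  utility_consistent sigma u -> forall X : 'I_m,
  SW u X <= C * Num.sqrt (m%:R) * harmonic R m / eps *
            \sum_(Y < m) th_dist sigma eps Y * SW u Y.
Proof.
exists 18 => n m eps n_gt0 m_gt0 eps_gt0 eps_le3 sigma u u_cons X.
have [Xh pv_out] := pv_defined sigma n_gt0 m_gt0.
under eq_bigr do rewrite (th_dist_mix eps pv_out).
have bound := welfare_bound Xh n_gt0 m_gt0 eps_gt0 eps_le3 u_cons X.
have h_ge1 := harmonic_ge1 R m_gt0.
set E := \sum_Y _ in bound *.
have -> : 18 * Num.sqrt m%:R * harmonic R m / eps * E =
          (3 * Num.sqrt m%:R * E) / th_scale m eps.
  by rewrite /th_scale; field; rewrite !gt_eqF // (lt_le_trans ltr01).
by rewrite ler_pdivlMr ?th_scale_gt0 // mulrC.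
Qed.

Theorem mainTheorem7 (R : realType) :
  (* metric distortion at most 3 + eps *)
  (forall (n m : nat) (eps : R), (0 < n)%N -> (0 < m)%N ->
     0 < eps -> eps <= 3 ->
     forall (sigma : profile n m) (d : 'I_n + 'I_m -> 'I_n + 'I_m -> R),
       pseudometric d -> metric_consistent sigma d ->
       forall X : 'I_m,
         \sum_(Y < m) th_dist sigma eps Y * SC d Y <= (3 + eps) * SC d X)
  /\
  (* utilitarian distortion O(sqrt m * H_m / eps) *)
  (exists C : R, forall (n m : nat) (eps : R), (0 < n)%N -> (0 < m)%N ->
     0 < eps -> eps <= 3 ->
     forall (sigma : profile n m) (u : 'I_n -> 'I_m -> R),
       utility_consistent sigma u ->
       forall X : 'I_m,
         SW u X <= C * Num.sqrt (m%:R) * harmonic R m / eps *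
                   \sum_(Y < m) th_dist sigma eps Y * SW u Y).
Proof.
split; [exact: th_metric_distortion | exact: th_utilitarian_distortion].
Qed.
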